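(* Let $T\in\mathcal{K}(V)$ with $\rho_S(T)\neq\emptyset$ and let $E_1,E_2$ be projections on $V$ (i.e. $E_i\in\mathcal{B}(V)$, $E_i^2=E_i$) such that $E_1+E_2=\mathcal{I}$ (hence $E_1E_2=E_2E_1=0$). Denote $V_i:=E_i(V)$ and $\operatorname{dom}(T_i):=E_i(\operatorname{dom}(T))$, and assume that $\operatorname{dom}(T_i)\subset\operatorname{dom}(T)$, $T(\operatorname{dom}(T_i))\subset V_i$ and that $T_i:=T|_{\operatorname{dom}(T_i)}$ is a closed operator on the right Banach module $V_i$, $i=1,2$. Then (i) $E_iTv=TE_iv$ for $v\in\operatorname{dom}(T)$; (ii) $\operatorname{dom}(T_i^2)=E_i(\operatorname{dom}(T^2))$ for $i\in\{1,2\}$; (iii) $\operatorname{ran}(\mathcal{Q}_s(T))=\operatorname{ran}(\mathcal{Q}_s(T_1))\oplus\operatorname{ran}(\mathcal{Q}_s(T_2))$ for every $s\in\mathbb{F}_0$; (iv) $\sigma_S(T)=\sigma_S(T_1)\cup\sigma_S(T_2)$; (v) $\sigma_{Sp}(T)=\sigma_{Sp}(T_1)\cup\sigma_{Sp}(T_2)$. If moreover $\sigma_S(T_1)\cap\sigma_S(T_2)=\emptyset$, then (vi) $\sigma_{Sc}(T)=\sigma_{Sc}(T_1)\cup\sigma_{Sc}(T_2)$ and (vii) $\sigma_{Sr}(T)=\sigma_{Sr}(T_1)\cup\sigma_{Sr}(T_2)$.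
   Context: Standing setting: either (a) $\mathbb{F}_0=\mathbb{F}=\mathbb{H}$, $V$ a two-sided quaternionic Banach space, $\mathcal{K}(V)$ the closed right linear operators on $V$; or (b) $\mathbb{F}=\mathbb{R}_n$ the real Clifford algebra generated by $e_1,\dots,e_n$, $\mathbb{F}_0=\mathbb{R}^{n+1}$ the paravectors $x_0+\sum x_ie_i$, $V=V_{\mathbb{R}}\otimes\mathbb{R}_n$ for a real Banach space $V_{\mathbb{R}}$, $\mathcal{K}(V)$ the operators of paravector type $T=T_0+\sum_{i=1}^nT_ie_i$ with closed $T_i$ on $V_{\mathbb{R}}$. $\mathcal{B}(V)$ bounded everywhere defined right linear operators, $\mathcal{I}$ identity. For a closed right linear operator $A$ on a right Banach module $W$ (here $W=V$ or $W=V_i$) and $s\in\mathbb{F}_0$, $\mathcal{Q}_s(A)=A^2-2\Re(s)A+|s|^2\mathcal{I}$ on $\operatorname{dom}(A^2)$; $\rho_S(A)=\{s\in\mathbb{F}_0:\mathcal{Q}_s(A)$ has a bounded inverse defined on all of $W\}$, $\sigma_S(A)=\mathbb{F}_0\setminus\rho_S(A)$. The point $S$-spectrum $\sigma_{Sp}(A)$ is the set of $s\in\mathbb{F}_0$ with $\ker\mathcal{Q}_s(A)\neq\{0\}$; the continuous $S$-spectrum $\sigma_{Sc}(A)$ is the set of $s$ with $\ker\mathcal{Q}_s(A)=\{0\}$ and $\operatorname{ran}\mathcal{Q}_s(A)$ dense in but different from $W$; the residual $S$-spectrum $\sigma_{Sr}(A)$ is the set of $s$ with $\ker\mathcal{Q}_s(A)=\{0\}$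 and $\operatorname{ran}\mathcal{Q}_s(A)$ not dense in $W$. $\oplus$ denotes a direct sum of right submodules. *)

From HB Require Import structures.
From mathcomp Require Import all_boot all_order all_algebra.
From mathcomp Require Import all_classical all_reals all_analysis.
Set Implicit Arguments. Unset Strict Implicit. Unset Printing Implicit Defensive.
Import Order.TTheory GRing.Theory Num.Theory.
Import numFieldNormedType.Exports.
Local Open Scope classical_set_scope.
Local Open Scope ring_scope.

(* An operator: a domain and an action (values outside dom irrelevant). *)
Record op (W : Type) := Op { dom : set W ; app : W -> W }.

Section Generic.
Variables (R : realType) (W : lmodType R).

Definition nconv (nrm : W -> R) (u : nat -> W) (x : W) : Prop :=
  (fun k => nrm (u k - x)) @ \oo --> (0 : R).

Definition real_lin_op (A : op W) : Prop :=
  dom A 0 /\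
  (forall v w, dom A v -> dom A w -> dom A (v + w) /\ app A (v + w) = app A v + app A w) /\
  (forall (r : R) v, dom A v -> dom A (r *: v) /\ app A (r *: v) = r *: app A v).

Definition right_lin_op (F : Type) (rm : W -> F -> W) (A : op W) : Prop :=
  real_lin_op A /\
  (forall v a, dom A v -> dom A (rm v a) /\ app A (rm v a) = rm (app A v) a).

Definition closed_in (nrm : W -> R) (S : set W) (A : op W) : Prop :=
  forall (u : nat -> W) x y, (forall k, dom A (u k)) -> S x -> S y ->
    nconv nrm u x -> nconv nrm (fun k => app A (u k)) y ->
    dom A x /\ app A x = y.

Definition bdd_rlin (F : Type) (rm : W -> F -> W) (nrm : W -> R) (E : W -> W) : Prop :=
  (forall v w, E (v + w) = E v + E w) /\
  (forall (r : R) v, E (r *: v) = r *: E v) /\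
  (forall v a, E (rm v a) = rm (E v) a) /\
  (exists C : R, forall v, nrm (E v) <= C * nrm v).

Section Spectra.
Variables (nrm : W -> R) (F0 : Type) (re : F0 -> R) (sqn : F0 -> R).
(* re s = Re(s), sqn s = |s|^2 *)

Definition dom2 (A : op W) : set W := [set x | dom A x /\ dom A (app A x)].

Definition Qs (A : op W) (s : F0) (x : W) : W :=
  app A (app A x) - (2 * re s) *: app A x + sqn s *: x.

Definition ranQ (A : op W) (s : F0) : set W :=
  [set y | exists2 x, dom2 A x & Qs A s x = y].

Definition Q_injective (A : op W) (s : F0) : Prop :=
  forall x, dom2 A x -> Qs A s x = 0 -> x = 0.

Definition dense_in (S D : set W) : Prop :=
  forall y, S y -> forall e : R, 0 < e -> exists2 x, D x & nrm (y - x) < e.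

(* S-resolvent set relative to the ambient module S (= V or V_i) *)
Definition rhoS (S : set W) (A : op W) : set F0 :=
  [set s | exists B : W -> W,
      (forall y, S y -> dom2 A (B y) /\ Qs A s (B y) = y) /\
      (forall x, dom2 A x -> B (Qs A s x) = x) /\
      (exists C : R, forall y, S y -> nrm (B y) <= C * nrm y)].

Definition sigmaS (S : set W) (A : op W) : set F0 := ~` rhoS S A.

Definition sigmaSp (A : op W) : set F0 :=
  [set s | exists x, [/\ dom2 A x, Qs A s x = 0 & x <> 0]].

Definition sigmaSc (S : set W) (A : op W) : set F0 :=
  [set s | [/\ Q_injective A s, dense_in S (ranQ A s) & ranQ A s <> S]].

Definition sigmaSr (S : set W) (A : op W) : set F0 :=
  [set s | Q_injective A s /\ ~ dense_in S (ranQ A s)].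

Definition restr_op (T : op W) (E : W -> W) : op W := Op (E @` dom T) (app T).

(* the hypotheses on T, E1, E2 other than membership in K(V), B(V) *)
Definition decomp_hyps (T : op W) (E1 E2 : W -> W) : Prop :=
  (exists s, rhoS setT T s) /\
  (forall v, E1 (E1 v) = E1 v) /\ (forall v, E2 (E2 v) = E2 v) /\
  (forall v, E1 v + E2 v = v) /\
  (forall E, E = E1 \/ E = E2 ->
     [/\ E @` dom T `<=` dom T,
         app T @` (E @` dom T) `<=` range E &
         closed_in nrm (range E) (restr_op T E)]).

Definition direct_sum_eq (X Y Z : set W) : Prop :=
  X = [set y + z | y in Y & z in Z] /\ Y `&` Z = [set 0].

Definition thm17_concl (T : op W) (E1 E2 : W -> W) : Prop :=
  let T1 := restr_op T E1 in let T2 := restr_op T E2 in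
  let V1 := range E1 in let V2 := range E2 in
  (forall E, E = E1 \/ E = E2 -> forall v, dom T v -> E (app T v) = app T (E v)) /\
  (forall E, E = E1 \/ E = E2 -> dom2 (restr_op T E) = E @` dom2 T) /\
  (forall s, direct_sum_eq (ranQ T s) (ranQ T1 s) (ranQ T2 s)) /\
  sigmaS setT T = sigmaS V1 T1 `|` sigmaS V2 T2 /\
  sigmaSp T = sigmaSp T1 `|` sigmaSp T2 /\
  (sigmaS V1 T1 `&` sigmaS V2 T2 = set0 ->
   sigmaSc setT T = sigmaSc V1 T1 `|` sigmaSc V2 T2 /\
   sigmaSr setT T = sigmaSr V1 T1 `|` sigmaSr V2 T2).

End Spectra.
End Generic.

Section Quat.
Variable R : realType.

Record quat := Quat { q0 : R ; q1 : R ; q2 : R ; q3 : R }.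

Definition qadd (a b : quat) : quat :=
  Quat (q0 a + q0 b) (q1 a + q1 b) (q2 a + q2 b) (q3 a + q3 b).

Definition qmul (a b : quat) : quat :=
  Quat (q0 a * q0 b - q1 a * q1 b - q2 a * q2 b - q3 a * q3 b)
       (q0 a * q1 b + q1 a * q0 b + q2 a * q3 b - q3 a * q2 b)
       (q0 a * q2 b - q1 a * q3 b + q2 a * q0 b + q3 a * q1 b)
       (q0 a * q3 b + q1 a * q2 b - q2 a * q1 b + q3 a * q0 b).

Definition qreal (r : R) : quat := Quat r 0 0 0.
Definition qre (a : quat) : R := q0 a.
Definition qsqn (a : quat) : R := q0 a ^+ 2 + q1 a ^+ 2 + q2 a ^+ 2 + q3 a ^+ 2.
Definition qabs (a : quat) : R := Num.sqrt (qsqn a).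

Definition two_sided_qbanach (V : completeNormedModType R)
    (lm : quat -> V -> V) (rm : V -> quat -> V) : Prop :=
  (forall v w a, rm (v + w) a = rm v a + rm w a) /\
  (forall v a b, rm v (qadd a b) = rm v a + rm v b) /\
  (forall v a b, rm (rm v a) b = rm v (qmul a b)) /\
  (forall v r, rm v (qreal r) = r *: v) /\
  (forall v w a, lm a (v + w) = lm a v + lm a w) /\
  (forall v a b, lm (qadd a b) v = lm a v + lm b v) /\
  (forall v a b, lm a (lm b v) = lm (qmul a b) v) /\
  (forall v r, lm (qreal r) v = r *: v) /\
  (forall v a b, lm a (rm v b) = rm (lm a v) b) /\
  (forall v a, `|rm v a| = `|v| * qabs a) /\
  (forall v a, `|lm a v| = qabs a * `|v|).

Definition K_quat (V : completeNormedModType R) (rm : V -> quat -> V) (T : op V) : Prop :=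
  right_lin_op rm T /\ closed_in (fun v : V => `|v|) setT T.

End Quat.

Section Cliff.
Variables (R : realType) (n : nat).

(* R_n: coefficients on the basis e_A, A a subset of {e_1..e_n}
   (generators indexed by 'I_n); e_A = e_{a1}...e_{ak}, a1<...<ak *)
Definition cliff := {ffun {set 'I_n} -> R}.

Definition symd (A B : {set 'I_n}) : {set 'I_n} := (A :\: B) :|: (B :\: A).

(* e_A e_B = cl_sign A B e_(symd A B), using e_i^2 = -1, e_i e_j = -e_j e_i *)
Definition cl_sign (A B : {set 'I_n}) : R :=
  (-1) ^+ (#|[set p : 'I_n * 'I_n | [&& p.1 \in A, p.2 \in B & (p.2 < p.1)%N]]|
           + #|A :&: B|).

Variable VR : completeNormedModType R.

(* V = V_R (x) R_n : v = sum_A v_A e_A *)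
Definition cV := {ffun {set 'I_n} -> VR}.

Definition cnorm (v : cV) : R := \sum_(A : {set 'I_n}) `|v A|.

Definition cl_rmul (v : cV) (a : cliff) : cV :=
  [ffun C => \sum_(A : {set 'I_n}) \sum_(B : {set 'I_n} | symd A B == C)
               (cl_sign A B * a B) *: v A].

(* paravectors R^{n+1}: s = s_0 + sum_i s_(i+1) e_(i+1) *)
Definition para := 'I_n.+1 -> R.
Definition pre (s : para) : R := s ord0.
Definition psqn (s : para) : R := \sum_(j < n.+1) s j ^+ 2.

(* T = T_0 + sum_i T_i e_i, Ts ord0 = T_0, Ts (lift ord0 i) = T for generator i;
   T v = sum_A T_0(v_A) e_A + sum_i sum_A T_i(v_A) e_i e_A *)
Definition para_dom (Ts : 'I_n.+1 -> op VR) : set cV :=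
  [set v | forall A j, dom (Ts j) (v A)].

Definition para_app (Ts : 'I_n.+1 -> op VR) (v : cV) : cV :=
  [ffun C => app (Ts ord0) (v C) +
     \sum_(i : 'I_n) cl_sign [set i] (symd [set i] C) *:
        app (Ts (lift ord0 i)) (v (symd [set i] C))].

Definition K_cliff (T : op cV) : Prop :=
  exists Ts : 'I_n.+1 -> op VR,
    (forall j, real_lin_op (Ts j) /\ closed_in (fun x : VR => `|x|) setT (Ts j)) /\
    dom T = para_dom Ts /\
    (forall v, dom T v -> app T v = para_app Ts v).

End Cliff.

From HB Require Import structures.
From mathcomp Require Import all_boot all_order all_algebra.
From mathcomp Require Import all_classical all_reals all_analysis.
Import Order.TTheory GRing.Theory Num.Theory.
Import numFieldNormedType.Exports.
Local Open Scope classical_set_scope.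
Local Open Scope ring_scope.
Set Implicit Arguments. Unset Strict Implicit.

(* Because E1 and E2 leave dom(T) invariant and are mapped into their own
   ranges by T, they commute with T; hence Q_s(T) x = Q_s(T1) (E1 x) +
   Q_s(T2) (E2 x).  Everything then splits componentwise: an inverse of
   Q_s(T) restricts to inverses of Q_s(Ti), and B1 E1 + B2 E2 inverts Q_s(T);
   kernels, ranges and their density split in the same way.  For the
   continuous and residual spectra, disjointness of the S-spectra of T1 and
   T2 means that at each s one component is invertible and contributes
   nothing. *)

Section RealLinearOperator.
Variables (R : realType) (W : lmodType R) (T : op W).
Hypothesis Tlin : real_lin_op T.

Lemma lin_dom0 : dom T 0. Proof. by case: Tlin. Qed.

Lemma lin_domD v w : dom T v -> dom T w -> dom T (v + w).
Proof. by case: Tlin => _ [H _] dv dw; case: (H v w dv dw). Qed.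

Lemma lin_appD v w : dom T v -> dom T w -> app T (v + w) = app T v + app T w.
Proof. by case: Tlin => _ [H _] dv dw; case: (H v w dv dw). Qed.

Lemma lin_domZ (r : R) v : dom T v -> dom T (r *: v).
Proof. by case: Tlin => _ [_ H] dv; case: (H r v dv). Qed.

Lemma lin_appZ (r : R) v : dom T v -> app T (r *: v) = r *: app T v.
Proof. by case: Tlin => _ [_ H] dv; case: (H r v dv). Qed.

Lemma lin_app0 : app T 0 = 0.
Proof. by rewrite -(scale0r 0) lin_appZ ?scale0r //; exact: lin_dom0. Qed.

Context {F0 : Type} {re sqn : F0 -> R}.

Lemma dom2_0 : dom2 T 0.
Proof. by split; rewrite ?lin_app0; exact: lin_dom0. Qed.

Lemma dom2D x y : dom2 T x -> dom2 T y -> dom2 T (x + y).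
Proof.
case=> dx dTx [dy dTy]; split; first exact: lin_domD.
by rewrite lin_appD //; exact: lin_domD.
Qed.

Lemma Qs0 s : Qs re sqn T s 0 = 0.
Proof. by rewrite /Qs !lin_app0 !scaler0 subrr addr0. Qed.

Lemma QsD s x y : dom2 T x -> dom2 T y ->
  Qs re sqn T s (x + y) = Qs re sqn T s x + Qs re sqn T s y.
Proof.
case=> dx dTx [dy dTy]; rewrite /Qs !lin_appD // !scalerDr opprD.
by rewrite (addrACA (app T (app T x))) (addrACA (app T (app T x) - _)).
Qed.

End RealLinearOperator.

Section ResolventFacts.
Variables (R : realType) (W : lmodType R) (nrm : W -> R) (F0 : Type).
Variables (re sqn : F0 -> R) (S : set W) (A : op W) (s : F0).

Lemma rhoS_sub_ranQ : rhoS nrm re sqn S A s -> S `<=` ranQ re sqn A s.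
Proof. by case=> B [inv _] y Sy; have [d q] := inv y Sy; exists (B y). Qed.

Lemma rhoS_ranQ : ranQ re sqn A s `<=` S -> rhoS nrm re sqn S A s ->
  ranQ re sqn A s = S.
Proof. by move=> ranS /rhoS_sub_ranQ Sran; apply/seteqP; split. Qed.

Lemma rhoS_Q_injective : dom2 A 0 -> Qs re sqn A s 0 = 0 ->
  rhoS nrm re sqn S A s -> Q_injective re sqn A s.
Proof. by move=> d0 q0 [B [_ [linv _]]] x dx qx; rewrite -(linv x dx) qx -{1}q0 linv. Qed.

Lemma rhoS_dense : nrm 0 = 0 -> rhoS nrm re sqn S A s ->
  dense_in nrm S (ranQ re sqn A s).
Proof.
move=> nrm0 /rhoS_sub_ranQ Sran y Sy e e0.
by exists y; [exact: Sran | rewrite subrr nrm0].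
Qed.

Lemma sigmaSc_sub_sigmaS : ranQ re sqn A s `<=` S ->
  sigmaSc nrm re sqn S A s -> sigmaS nrm re sqn S A s.
Proof. by move=> ranS [_ _ nfull] /(rhoS_ranQ ranS). Qed.

Lemma sigmaSr_sub_sigmaS : nrm 0 = 0 ->
  sigmaSr nrm re sqn S A s -> sigmaS nrm re sqn S A s.
Proof. by move=> nrm0 [_ ndense] /(rhoS_dense nrm0). Qed.

End ResolventFacts.

(* The shape of (vi) and (vii): off the S-spectrum of T2 the part of T is
   that of T1, and symmetrically. *)
Lemma eq_setU_off_disjoint (X : Type) (sig1 sig2 P P1 P2 : set X) :
  sig1 `&` sig2 = set0 -> P1 `<=` sig1 -> P2 `<=` sig2 ->
  (forall s, ~ sig2 s -> P s <-> P1 s) -> (forall s, ~ sig1 s -> P s <-> P2 s) ->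
  P = P1 `|` P2.
Proof.
move=> disj P1sig P2sig eq1 eq2.
have ndisj s : sig1 s -> ~ sig2 s.
  by move=> s1 s2; have : (sig1 `&` sig2) s by []; rewrite disj.
apply/seteqP; split => s.
  move=> Ps; have [s2|n2] := pselect (sig2 s); last by left; apply/eq1.
  by right; apply/eq2 => // s1; exact: ndisj s1 s2.
case=> [P1s|P2s]; first by apply/(eq1 _ (ndisj _ (P1sig _ P1s))).
by apply/(eq2 _ (fun s1 => ndisj _ s1 (P2sig _ P2s))).
Qed.

(* E' is the complementary projection; the record is asymmetric so that both
   (E1, E2) and (E2, E1) instantiate it. *)
Record reducing_pair (R : realType) (W : lmodType R) (nrm : W -> R)
    (T : op W) (E E' : W -> W) : Prop := ReducingPair {
  rp_lin : real_lin_op T;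
  rp_idem : forall v, E (E v) = E v;
  rp_compl : forall v, E v + E' v = v;
  rp_additive : forall v w, E (v + w) = E v + E w;
  rp_scalable : forall (r : R) v, E (r *: v) = r *: E v;
  rp_bounded : exists C, forall v, nrm (E v) <= C * nrm v;
  rp_dom : E @` dom T `<=` dom T;
  rp_dom_compl : E' @` dom T `<=` dom T;
  rp_ran : app T @` (E @` dom T) `<=` range E;
  rp_ran_compl : app T @` (E' @` dom T) `<=` range E' }.

Section Reduction.
Variables (R : realType) (W : lmodType R) (nrm : W -> R) (F0 : Type).
Context {re sqn : F0 -> R}.
Variables (T : op W) (E E' : W -> W).
Hypothesis hE : reducing_pair nrm T E E'.

Local Notation Q := (Qs re sqn T).
Local Notation TE := (restr_op T E).

Let EI := rp_idem hE.
Let ED := rp_additive hE.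
Let EZ := rp_scalable hE.

Lemma proj0 : E 0 = 0.
Proof. by apply/(addrI (E 0)); rewrite -ED !addr0. Qed.

Lemma projB v w : E (v - w) = E v - E w.
Proof. by rewrite ED -scaleN1r EZ scaleN1r. Qed.

Lemma proj_range y : range E y -> E y = y.
Proof. by case=> x _ <-; rewrite EI. Qed.

Lemma proj_range_compl y : range E' y -> E y = 0.
Proof.
case=> x _ <-; apply/(addrI (E x)).
by rewrite -{1}EI -ED (rp_compl hE) addr0.
Qed.

Lemma proj_dom v : dom T v -> dom T (E v).
Proof. by move=> dv; apply: (rp_dom hE); exists v. Qed.

Lemma proj_app_comm v : dom T v -> E (app T v) = app T (E v).
Proof.
move=> dv; have dE := proj_dom dv.
have dE' : dom T (E' v) by apply: (rp_dom_compl hE); exists v.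
have TE_E : range E (app T (E v)) by apply: (rp_ran hE); exists (E v) => //; exists v.
have TE_E' : range E' (app T (E' v)) by apply: (rp_ran_compl hE); exists (E' v) => //; exists v.
rewrite -{1}(rp_compl hE v) (lin_appD (rp_lin hE) dE dE') ED.
by rewrite (proj_range TE_E) (proj_range_compl TE_E') addr0.
Qed.

Lemma proj_dom2 x : dom2 T x -> dom2 T (E x).
Proof. by case=> dx dTx; split; rewrite -?proj_app_comm //; exact: proj_dom. Qed.

Lemma proj_Qs s x : dom2 T x -> Q s (E x) = E (Q s x).
Proof.
by case=> dx dTx; rewrite /Qs ED projB !EZ !proj_app_comm // proj_dom.
Qed.

Lemma dom2_restr : dom2 TE = E @` dom2 T.
Proof.
apply/seteqP; split => x.
  case=> [[v dv <-]] [w dw /= Tw]; exists (E v); last by rewrite EI.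
  by split; [exact: proj_dom | rewrite -Tw; exact: proj_dom].
by case=> v [dv dTv] <-; split; [exists v | exists (app T v); rewrite ?proj_app_comm].
Qed.

Lemma dom2_restrP x : dom2 TE x <-> dom2 T x /\ E x = x.
Proof.
rewrite dom2_restr; split; first by case=> v dv <-; rewrite EI; split => //; exact: proj_dom2.
by case=> dx Ex; exists x.
Qed.

Lemma dom2_restr_proj x : dom2 T x -> dom2 TE (E x).
Proof. by move=> dx; apply/dom2_restrP; rewrite EI; split => //; exact: proj_dom2. Qed.

Lemma dom2_restr0 : dom2 TE 0.
Proof. by apply/dom2_restrP; rewrite proj0; split => //; exact: dom2_0 (rp_lin hE). Qed.

Lemma ranQ_restr s : ranQ re sqn TE s = E @` ranQ re sqn T s.
Proof.
apply/seteqP; split => y.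
  by case=> x /dom2_restrP [dx Ex] <-; exists (Q s x); [exists x | rewrite -proj_Qs // Ex].
by case=> _ [x dx <-] <-; exists (E x); [exact: dom2_restr_proj | exact: proj_Qs].
Qed.

Lemma ranQ_restr_range s : ranQ re sqn TE s `<=` range E.
Proof. by rewrite ranQ_restr => _ [y _ <-]; exact: imageT. Qed.

Lemma rhoS_restr s : rhoS nrm re sqn setT T s -> rhoS nrm re sqn (range E) TE s.
Proof.
case=> B [rinv [linv bnd]]; exists B; split; last split => //.
- move=> y Ey; have [d q] := rinv y I.
  have EB : E (B y) = B y.
    by rewrite -[LHS](linv _ (proj_dom2 d)) proj_Qs // q proj_range.
  by split => //; apply/dom2_restrP.
- by move=> x /dom2_restrP [dx _]; exact: linv.
- by case: bnd => C bnd; exists C => y _; exact: bnd.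
Qed.

Lemma rhoS_Q_injective_restr s : rhoS nrm re sqn (range E) TE s -> Q_injective re sqn TE s.
Proof. exact: rhoS_Q_injective dom2_restr0 (Qs0 (rp_lin hE) s). Qed.

Hypothesis nrm_ge0 : forall v, 0 <= nrm v.

Lemma dense_restr s : dense_in nrm setT (ranQ re sqn T s) ->
  dense_in nrm (range E) (ranQ re sqn TE s).
Proof.
move=> dense y Ey e e0; case: (rp_bounded hE) => C EC.
have C0 : 0 < `|C| + 1 by rewrite ltr_wpDl.
have [x rx yx] := dense y I (e / (`|C| + 1)) (divr_gt0 e0 C0).
exists (E x); first by rewrite ranQ_restr; exists x.
rewrite -(proj_range Ey) -projB; apply: (le_lt_trans (EC _)).
apply: (@le_lt_trans _ _ ((`|C| + 1) * nrm (y - x))); last by rewrite mulrC -ltr_pdivlMr.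
by apply: ler_wpM2r => //; apply: (le_trans (ler_norm C)); rewrite lerDl.
Qed.

End Reduction.

Section Decomposition.
Variables (R : realType) (W : lmodType R) (nrm : W -> R) (F0 : Type).
Context {re sqn : F0 -> R}.
Variables (T : op W) (E1 E2 : W -> W).
Hypothesis nrm0 : nrm 0 = 0.
Hypothesis nrm_ge0 : forall v, 0 <= nrm v.
Hypothesis nrmD : forall v w, nrm (v + w) <= nrm v + nrm w.
Hypothesis h12 : reducing_pair nrm T E1 E2.
Hypothesis h21 : reducing_pair nrm T E2 E1.

Local Notation Q := (Qs re sqn T).
Local Notation T1 := (restr_op T E1).
Local Notation T2 := (restr_op T E2).

Let sum12 v : E1 v + E2 v = v. Proof. exact: (rp_compl h12 v). Qed.

Lemma ranQ_split s : ranQ re sqn T s =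
  [set y + z | y in ranQ re sqn T1 s & z in ranQ re sqn T2 s].
Proof.
apply/seteqP; split => y.
  case=> x dx <-; exists (Q s (E1 x)).
    by rewrite (ranQ_restr h12); exists (Q s x); [exists x | rewrite (proj_Qs h12)].
  exists (Q s (E2 x)).
    by rewrite (ranQ_restr h21); exists (Q s x); [exists x | rewrite (proj_Qs h21)].
  by rewrite (proj_Qs h12) // (proj_Qs h21) // sum12.
case=> _ [x1 /(dom2_restrP h12) [d1 _] <-] [_ [x2 /(dom2_restrP h21) [d2 _] <-] <-].
exists (x1 + x2); first exact: (dom2D (rp_lin h12) d1 d2).
exact: (QsD (rp_lin h12)).
Qed.

Lemma ranQ_cap s : ranQ re sqn T1 s `&` ranQ re sqn T2 s = [set 0].
Proof.
apply/seteqP; split => y.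
  case=> r1 r2; have y1 := proj_range h12 (ranQ_restr_range h12 r1).
  have y2 := proj_range h21 (ranQ_restr_range h21 r2).
  by apply/(addrI y); rewrite addr0 -{3}(sum12 y) y1 y2.
move=> -> /=; split; exists 0; try exact: (Qs0 (rp_lin h12)).
  exact: (dom2_restr0 h12).
exact: (dom2_restr0 h21).
Qed.

Lemma ranQ_add s x1 x2 : ranQ re sqn T1 s x1 -> ranQ re sqn T2 s x2 ->
  ranQ re sqn T s (x1 + x2).
Proof. by move=> r1 r2; rewrite ranQ_split; exists x1 => //; exists x2. Qed.

Lemma Q_injective_split s : Q_injective re sqn T s <->
  Q_injective re sqn T1 s /\ Q_injective re sqn T2 s.
Proof.
split.
  move=> inj; split => x.
    by move=> /(dom2_restrP h12) [dx _]; exact: inj.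
  by move=> /(dom2_restrP h21) [dx _]; exact: inj.
case=> inj1 inj2 x dx qx.
have E1x : E1 x = 0.
  apply: inj1; first exact: (dom2_restr_proj h12).
  by change (Q s (E1 x) = 0); rewrite (proj_Qs h12) // qx (proj0 h12).
have E2x : E2 x = 0.
  apply: inj2; first exact: (dom2_restr_proj h21).
  by change (Q s (E2 x) = 0); rewrite (proj_Qs h21) // qx (proj0 h21).
by rewrite -(sum12 x) E1x E2x addr0.
Qed.

Lemma dense_split s : dense_in nrm setT (ranQ re sqn T s) <->
  dense_in nrm (range E1) (ranQ re sqn T1 s) /\
  dense_in nrm (range E2) (ranQ re sqn T2 s).
Proof.
split.
  by move=> dense; split; [exact: (dense_restr h12) | exact: (dense_restr h21)].
case=> dense1 dense2 y _ e e0; have e20 : 0 < e / 2 by rewrite divr_gt0.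
have [x1 r1 yx1] := dense1 (E1 y) (imageT _ _) _ e20.
have [x2 r2 yx2] := dense2 (E2 y) (imageT _ _) _ e20.
exists (x1 + x2); first exact: ranQ_add.
have -> : y - (x1 + x2) = (E1 y - x1) + (E2 y - x2).
  by rewrite -{1}(sum12 y) opprD addrACA.
by apply: (le_lt_trans (nrmD _ _)); rewrite [e]splitr ltrD.
Qed.

Lemma ranQ_full_split s : ranQ re sqn T s = setT <->
  ranQ re sqn T1 s = range E1 /\ ranQ re sqn T2 s = range E2.
Proof.
split; first by move=> full; split; rewrite (ranQ_restr h12, ranQ_restr h21) full.
case=> full1 full2; apply/seteqP; split => // y _.
by rewrite -(sum12 y); apply: ranQ_add; [rewrite full1 | rewrite full2]; exact: imageT.
Qed.

Let le_abs_bound (C : R) u v : nrm u <= C * nrm v -> nrm u <= `|C| * nrm v.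
Proof. by move=> uv; apply: (le_trans uv); apply: ler_wpM2r => //; exact: ler_norm. Qed.

(* The inverse of Q_s(T) is B1 E1 + B2 E2 for inverses Bi of Q_s(Ti). *)
Lemma rhoS_split s : rhoS nrm re sqn setT T s <->
  rhoS nrm re sqn (range E1) T1 s /\ rhoS nrm re sqn (range E2) T2 s.
Proof.
split; first by move=> rho; split; [exact: (rhoS_restr h12) | exact: (rhoS_restr h21)].
case=> -[B1 [rinv1 [linv1 [C1 bnd1]]]] [B2 [rinv2 [linv2 [C2 bnd2]]]].
case: (rp_bounded h12) (rp_bounded h21) => [K1 EK1] [K2 EK2].
exists (fun y => B1 (E1 y) + B2 (E2 y)); split; last split.
- move=> y _; have [/(dom2_restrP h12) [d1 _] q1] := rinv1 _ (imageT E1 y).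
  have [/(dom2_restrP h21) [d2 _] q2] := rinv2 _ (imageT E2 y).
  split; first exact: (dom2D (rp_lin h12) d1 d2).
  rewrite (QsD (rp_lin h12) s d1 d2) -[RHS]sum12.
  by congr (_ + _); [exact: q1 | exact: q2].
- move=> x dx; rewrite -(proj_Qs h12) // -(proj_Qs h21) // -[RHS]sum12.
  congr (_ + _); [exact: linv1 (dom2_restr_proj h12 dx) | exact: linv2 (dom2_restr_proj h21 dx)].
- exists (`|C1| * `|K1| + `|C2| * `|K2|) => y _.
  apply: (le_trans (nrmD _ _)); rewrite mulrDl; apply: lerD.
    apply: (le_trans (le_abs_bound (bnd1 _ (imageT E1 y)))).
    by rewrite -mulrA ler_wpM2l // (le_abs_bound (EK1 y)).
  apply: (le_trans (le_abs_bound (bnd2 _ (imageT E2 y)))).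
  by rewrite -mulrA ler_wpM2l // (le_abs_bound (EK2 y)).
Qed.

Lemma sigmaS_split : sigmaS nrm re sqn setT T =
  sigmaS nrm re sqn (range E1) T1 `|` sigmaS nrm re sqn (range E2) T2.
Proof.
apply/seteqP; split => s /=; last by case=> nrho /rhoS_split [].
move=> nrho; apply/not_andP => rho12; exact/nrho/rhoS_split.
Qed.

Lemma sigmaSp_split : sigmaSp re sqn T = sigmaSp re sqn T1 `|` sigmaSp re sqn T2.
Proof.
apply/seteqP; split => s.
  case=> x [dx qx nx].
  have ker1 : Q s (E1 x) = 0 by rewrite (proj_Qs h12) // qx (proj0 h12).
  have ker2 : Q s (E2 x) = 0 by rewrite (proj_Qs h21) // qx (proj0 h21).
  have [E1x|E1x] := eqVneq (E1 x) 0.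
    right; exists (E2 x); split => //; first exact: (dom2_restr_proj h21).
    by move=> E2x; apply: nx; rewrite -(sum12 x) E1x E2x addr0.
  by left; exists (E1 x); split => //; [exact: (dom2_restr_proj h12) | exact/eqP].
case=> -[x [dx qx nx]]; exists x; split => //.
  by case/(dom2_restrP h12): dx.
by case/(dom2_restrP h21): dx.
Qed.

Lemma sigmaSc_rhoS s : rhoS nrm re sqn (range E2) T2 s ->
  sigmaSc nrm re sqn setT T s <-> sigmaSc nrm re sqn (range E1) T1 s.
Proof.
move=> rho2; have inj2 := rhoS_Q_injective_restr h21 rho2.
have dense2 := rhoS_dense nrm0 rho2.
have full2 := rhoS_ranQ (ranQ_restr_range h21 (s := s)) rho2.
split.
  case=> /Q_injective_split [inj1 _] /dense_split [dense1 _] nfull.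
  by split=> // full1; apply/nfull/ranQ_full_split.
case=> inj1 dense1 nfull1; split; [exact/Q_injective_split | exact/dense_split |].
by case/ranQ_full_split.
Qed.

Lemma sigmaSr_rhoS s : rhoS nrm re sqn (range E2) T2 s ->
  sigmaSr nrm re sqn setT T s <-> sigmaSr nrm re sqn (range E1) T1 s.
Proof.
move=> rho2; have inj2 := rhoS_Q_injective_restr h21 rho2.
have dense2 := rhoS_dense nrm0 rho2.
split.
  case=> /Q_injective_split [inj1 _] ndense.
  by split=> // dense1; apply/ndense/dense_split.
case=> inj1 ndense1; split; first exact/Q_injective_split.
by case/dense_split.
Qed.

End Decomposition.

Theorem reducing_pairs_spectra (R : realType) (W : lmodType R) (nrm : W -> R)
    (F0 : Type) (re sqn : F0 -> R) (T : op W) (E1 E2 : W -> W) :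
  nrm 0 = 0 -> (forall v, 0 <= nrm v) -> (forall v w, nrm (v + w) <= nrm v + nrm w) ->
  reducing_pair nrm T E1 E2 -> reducing_pair nrm T E2 E1 ->
  thm17_concl nrm re sqn T E1 E2.
Proof.
move=> nrm0 nrm_ge0 nrmD h12 h21; rewrite /thm17_concl; cbv zeta.
split; first by move=> E [->|->]; [exact: (proj_app_comm h12) | exact: (proj_app_comm h21)].
split; first by move=> E [->|->]; [exact: (dom2_restr h12) | exact: (dom2_restr h21)].
split; first by move=> s; split; [exact: (ranQ_split h12 h21) | exact: (ranQ_cap h12 h21)].
split; first exact: (sigmaS_split nrm_ge0 nrmD h12 h21).
split; first exact: (sigmaSp_split h12 h21).
move=> disj; split; apply: (eq_setU_off_disjoint disj).
- by move=> s; apply: sigmaSc_sub_sigmaS; exact: (ranQ_restr_range h12).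
- by move=> s; apply: sigmaSc_sub_sigmaS; exact: (ranQ_restr_range h21).
- by move=> s nsig; apply: (sigmaSc_rhoS nrm0 nrm_ge0 nrmD h12 h21); exact/not_notP.
- by move=> s nsig; apply: (sigmaSc_rhoS nrm0 nrm_ge0 nrmD h21 h12); exact/not_notP.
- by move=> s; exact: sigmaSr_sub_sigmaS.
- by move=> s; exact: sigmaSr_sub_sigmaS.
- by move=> s nsig; apply: (sigmaSr_rhoS nrm0 nrm_ge0 nrmD h12 h21); exact/not_notP.
- by move=> s nsig; apply: (sigmaSr_rhoS nrm0 nrm_ge0 nrmD h21 h12); exact/not_notP.
Qed.

Lemma decomp_hyps_reducing (R : realType) (W : lmodType R) (F : Type) (rm : W -> F -> W)
    (nrm : W -> R) (F0 : Type) (re sqn : F0 -> R) (T : op W) (E1 E2 : W -> W) :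
  real_lin_op T -> bdd_rlin rm nrm E1 -> bdd_rlin rm nrm E2 ->
  decomp_hyps nrm re sqn T E1 E2 ->
  reducing_pair nrm T E1 E2 /\ reducing_pair nrm T E2 E1.
Proof.
move=> Tlin [E1D [E1Z [_ E1B]]] [E2D [E2Z [_ E2B]]] [_ [EE1 [EE2 [sum12 inv]]]].
have [dom1 ran1 _] := inv E1 (or_introl erefl).
have [dom2 ran2 _] := inv E2 (or_intror erefl).
by split; constructor => // v; rewrite addrC.
Qed.

Lemma paravector_lin (R : realType) (n : nat) (VR : completeNormedModType R)
    (T : op (cV n VR)) :
  K_cliff T -> real_lin_op T.
Proof.
case=> Ts [TsP [domT appT]].
have L j : real_lin_op (Ts j) by case: (TsP j).
split; [|split].
- by rewrite domT => A j; rewrite ffunE; exact: lin_dom0 (L j).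
- move=> v w; rewrite domT => dv dw.
  have dvw : para_dom Ts (v + w) by move=> A j; rewrite ffunE; exact: lin_domD.
  split => //; rewrite !appT ?domT //.
  apply/ffunP => C; rewrite !ffunE.
  under eq_bigr => i _ do rewrite ffunE (lin_appD (L _) (dv _ _) (dw _ _)) scalerDr.
  by rewrite (lin_appD (L _) (dv _ _) (dw _ _)) big_split /= addrACA.
- move=> r v; rewrite domT => dv.
  have drv : para_dom Ts (r *: v) by move=> A j; rewrite ffunE; exact: lin_domZ.
  split => //; rewrite !appT ?domT //.
  apply/ffunP => C; rewrite !ffunE.
  under eq_bigr => i _ do rewrite ffunE (lin_appZ (L _) _ (dv _ _)) scalerA mulrC -scalerA.
  by rewrite (lin_appZ (L _) _ (dv _ _)) scalerDr scaler_sumr.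
Qed.

Section CliffordNorm.
Variables (R : realType) (n : nat) (VR : completeNormedModType R).

Lemma cnorm0 : cnorm (0 : cV n VR) = 0.
Proof. by rewrite /cnorm big1 // => A _; rewrite ffunE normr0. Qed.

Lemma cnorm_ge0 (v : cV n VR) : 0 <= cnorm v.
Proof. exact: sumr_ge0. Qed.

Lemma cnormD (v w : cV n VR) : cnorm (v + w) <= cnorm v + cnorm w.
Proof. by rewrite /cnorm -big_split /=; apply: ler_sum => A _; rewrite ffunE ler_normD. Qed.

End CliffordNorm.

Theorem mainTheorem17 (R : realType) :
  (* setting (a): two-sided quaternionic Banach space *)
  (forall (V : completeNormedModType R) (lm : quat R -> V -> V) (rm : V -> quat R -> V),
     two_sided_qbanach lm rm ->
     forall (T : op V) (E1 E2 : V -> V),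
       K_quat rm T ->
       bdd_rlin rm (fun v : V => `|v|) E1 -> bdd_rlin rm (fun v : V => `|v|) E2 ->
       decomp_hyps (fun v : V => `|v|) (@qre R) (@qsqn R) T E1 E2 ->
       thm17_concl (fun v : V => `|v|) (@qre R) (@qsqn R) T E1 E2) /\
  (* setting (b): V = V_R (x) R_n, operators of paravector type *)
  (forall (n : nat) (VR : completeNormedModType R) (T : op (cV n VR))
          (E1 E2 : cV n VR -> cV n VR),
     K_cliff T ->
     bdd_rlin (@cl_rmul R n VR) (@cnorm R n VR) E1 ->
     bdd_rlin (@cl_rmul R n VR) (@cnorm R n VR) E2 ->
     decomp_hyps (@cnorm R n VR) (@pre R n) (@psqn R n) T E1 E2 ->
     thm17_concl (@cnorm R n VR) (@pre R n) (@psqn R n) T E1 E2).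
Proof.
split.
  move=> V lm rm _ T E1 E2 [[Tlin _] _] bdd1 bdd2 hyps.
  have [h12 h21] := decomp_hyps_reducing Tlin bdd1 bdd2 hyps.
  exact: reducing_pairs_spectra (@normr0 _ V) (@normr_ge0 _ V) (@ler_normD _ V) h12 h21.
move=> n VR T E1 E2 /paravector_lin Tlin bdd1 bdd2 hyps.
have [h12 h21] := decomp_hyps_reducing Tlin bdd1 bdd2 hyps.
exact: reducing_pairs_spectra (@cnorm0 R n VR) (@cnorm_ge0 R n VR) (@cnormD R n VR) h12 h21.
Qed.
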